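(* Let $G$ be a $2K_2$-free graph on $n$ vertices, and let $\alpha(G)$ be its independence number. Then the set $\{x\in V(G) \mid d_G(x)\le \frac{n-\alpha(G)}{2}\}$ is an independent set in $G$.
   Context: All graphs are finite, simple and undirected. A graph is $2K_2$-free if it does not contain $2K_2$ (the graph on four vertices consisting of two independent edges) as an induced subgraph. $d_G(x)$ is the degree of $x$ in $G$ and $\alpha(G)$ is the maximum size of an independent set in $G$. *)

From mathcomp Require Import all_boot.
Set Implicit Arguments. Unset Strict Implicit. Unset Printing Implicit Defensive.

Definition simple_graph (T : finType) (e : rel T) : Prop :=
  symmetric e /\ irreflexive e.

Definition degree (T : finType) (e : rel T) (x : T) : nat := #|[set y | e x y]|.

Definition independent (T : finType) (e : rel T) (S : {set T}) : bool :=
  [forall x in S, forall y in S, ~~ e x y].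

Definition alpha (T : finType) (e : rel T) : nat :=
  \max_(S : {set T} | independent e S) #|S|.

Definition twoK2_free (T : finType) (e : rel T) : Prop :=
  forall a b c d : T,
    uniq [:: a; b; c; d] -> e a b -> e c d ->
    e a c || e a d || e b c || e b d.

(* Let [x y] be an edge and [W] the set of vertices adjacent to neither [x]
   nor [y].  An edge inside [W] would form an induced [2K_2] with [x y], so
   [x |: W] is independent and [alpha >= 1 + |W| >= 1 + n - d(x) - d(y)].
   Hence [d(x) + d(y) > n - alpha], so [x] and [y] cannot both have degree at
   most [(n - alpha) / 2]. *)

From mathcomp Require Import all_boot.
From mathcomp Require Import zify.

Set Implicit Arguments.
Unset Strict Implicit.
Unset Printing Implicit Defensive.

Section TwoK2FreeGraph.

Variables (T : finType) (e : rel T).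
Hypotheses (e_sym : symmetric e) (e_irr : irreflexive e).

Definition nbhd (x : T) : {set T} := [set y | e x y].

Lemma independentP (S : {set T}) :
  reflect {in S &, forall a b, ~~ e a b} (independent e S).
Proof.
apply: (iffP forallP) => [indS a b aS bS | indS a].
  by move/implyP/(_ aS)/forallP/(_ b)/implyP: (indS a); apply.
by apply/implyP=> aS; apply/forall_inP=> b bS; apply: indS.
Qed.

Lemma independent_card_le_alpha (S : {set T}) :
  independent e S -> #|S| <= alpha e.
Proof. exact: (@leq_bigmax_cond _ (independent e) (fun S => #|S|)). Qed.

Lemma independent_setU1 (x : T) (S : {set T}) :
  independent e S -> {in S, forall z, ~~ e x z} -> independent e (x |: S).
Proof.
move=> /independentP indS xS; apply/independentP=> a b.
rewrite !in_setU1 => /predU1P[-> | aS] /predU1P[-> | bS].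
- by rewrite e_irr.
- exact: xS.
- by rewrite e_sym; apply: xS.
- exact: indS.
Qed.

Lemma twoK2_free_common_non_nbhd_independent (x y : T) :
  twoK2_free e -> e x y -> independent e (~: (nbhd x :|: nbhd y)).
Proof.
move=> free exy; apply/independentP=> a b.
rewrite !inE !negb_or => /andP[xa ya] /andP[xb yb]; apply/negP=> eab.
have neq_edge u v : e u v -> u != v by apply: contraTneq => ->; rewrite e_irr.
have neq_nbhd w u v : e w u -> ~~ e w v -> u != v.
  by move=> ewu; apply: contraNneq => <-.
have eyx : e y x by rewrite e_sym.
have distinct : uniq [:: x; y; a; b].
  rewrite /= !inE !negb_or (neq_edge x y) // (neq_edge a b) //.
  by rewrite (neq_nbhd y x a) // (neq_nbhd y x b) // (neq_nbhd x y a) // (neq_nbhd x y b).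
move: (free _ _ _ _ distinct exy eab).
by rewrite (negbTE xa) (negbTE xb) (negbTE ya) (negbTE yb).
Qed.

Lemma twoK2_free_edge_degree_sum (x y : T) :
  twoK2_free e -> e x y -> #|T| - alpha e < degree e x + degree e y.
Proof.
move=> free exy; set W := ~: (nbhd x :|: nbhd y).
have xW : x \notin W by rewrite !inE -e_sym exy orbT.
have indxW : independent e (x |: W).
  apply: independent_setU1 => [|z].
    exact: twoK2_free_common_non_nbhd_independent.
  by rewrite !inE negb_or => /andP[].
have := independent_card_le_alpha indxW; rewrite cardsU1 xW cardsCs setCK /=.
have le_U : #|nbhd x :|: nbhd y| <= degree e x + degree e y.
  exact: (leq_card_setU _ _).1.
have deg_x_pos : 0 < degree e x.
  by rewrite /degree card_gt0; apply/set0Pn; exists y; rewrite inE.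
lia.
Qed.

End TwoK2FreeGraph.

Theorem lemma10 (T : finType) (e : rel T) :
  simple_graph e -> twoK2_free e ->
  independent e [set x | 2 * degree e x <= #|T| - alpha e].
Proof.
move=> [e_sym e_irr] free; apply/independentP=> x y.
rewrite !inE => low_x low_y; apply/negP=> exy.
have := twoK2_free_edge_degree_sum e_sym e_irr free exy.
lia.
Qed.
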